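(* Let $G$ be a finite simple graph with vertices ordered as $V(G)=\{u_1,\dots,u_n\}$, and let $\widehat{G}$ be the graph constructed from $G$ and this ordering as follows: $V(\widehat{G})=\{(u_i,u_j)\,:\,1\le i<j\le n,\ u_iu_j\in E(G)\}$, and two distinct vertices $(u_i,u_j)$ and $(u_k,u_l)$ of $\widehat{G}$ with $j\le l$ are adjacent if and only if $i=k$, or $j=k$, or ($j=l$ and $u_iu_k\notin E(G)$). Then \[ h^*(G,x)=I(\widehat{G},x). \] Moreover, if $e=u_{n-1}u_n\in E(G)$, then $\widehat{G-e}$ (constructed from $G-e$ with the same vertex ordering) is a subgraph of $\widehat{G}$.
   Context: For a graph $G$ on $n$ vertices, let $a_k(G)$ denote the number of partitions of $V(G)$ into exactly $k$ parts each of which induces a complete subgraph of $G$. The adjoint polynomial is $h(G,x)=\sum_{k=1}^n(-1)^{n-k}a_k(G)x^k$, and $h^*(G,x)=x^n h(G,1/x)=\sum_{k=0}^{n-1}(-1)^k a_{n-k}(G)x^k$. For a graph $H$, the independence polynomial is $I(H,x)=\sum_{k\ge 0}(-1)^k i_k(H)x^k$, where $i_k(H)$ is the number of independent sets of size $k$ in $H$ (with $i_0(H)=1$). $G-e$ denotes the graph obtained from $G$ by deleting the edge $e$. *)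

From mathcomp Require Import all_boot all_order all_algebra.
Set Implicit Arguments. Unset Strict Implicit. Unset Printing Implicit Defensive.
Import GRing.Theory.
Local Open Scope ring_scope.

(* A finite simple graph on the ordered vertex set u_1 < ... < u_n is
   represented on 'I_n (u_{i+1} is the ordinal i) by a relation adj,
   assumed symmetric and irreflexive in the theorem. *)

Definition is_clique (n : nat) (adj : rel 'I_n) (B : {set 'I_n}) : bool :=
  [forall x in B, forall y in B, (x != y) ==> adj x y].

Definition a_k (n : nat) (adj : rel 'I_n) (k : nat) : nat :=
  #|[set P : {set {set 'I_n}} | [&& partition P [set: 'I_n],
        [forall B in P, is_clique adj B] & #|P| == k]]|.

Definition hstar (n : nat) (adj : rel 'I_n) : {poly int} :=
  \sum_(k < n) (((-1) ^+ k * ((a_k adj (n - k))%:R : int)) *: 'X^k).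

Definition del_edge (n : nat) (adj : rel 'I_n) (a b : 'I_n) : rel 'I_n :=
  fun x y => adj x y && ~~ (((x == a) && (y == b)) || ((x == b) && (y == a))).

Definition hat_V (n : nat) (adj : rel 'I_n) : {set 'I_n * 'I_n} :=
  [set p : 'I_n * 'I_n | (p.1 < p.2)%N && adj p.1 p.2].

Definition hat_cond (n : nat) (adj : rel 'I_n) (i j k l : 'I_n) : bool :=
  [|| i == k, j == k | (j == l) && ~~ adj i k].

Definition hat_adj (n : nat) (adj : rel 'I_n) : rel ('I_n * 'I_n) :=
  fun p q => (p != q) &&
    (if (p.2 <= q.2)%N then hat_cond adj p.1 p.2 q.1 q.2
     else hat_cond adj q.1 q.2 p.1 p.2).

Definition hat_indep (n : nat) (adj : rel 'I_n) (S : {set 'I_n * 'I_n}) : bool :=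
  (S \subset hat_V adj) &&
  [forall p in S, forall q in S, ~~ hat_adj adj p q].

Definition i_k (n : nat) (adj : rel 'I_n) (k : nat) : nat :=
  #|[set S : {set 'I_n * 'I_n} | hat_indep adj S && (#|S| == k)]|.

(* I(\hat G, x) = sum_k (-1)^k i_k x^k (i_k = 0 for k > |V(\hat G)|). *)
Definition indep_poly_hat (n : nat) (adj : rel 'I_n) : {poly int} :=
  \sum_(k < #|hat_V adj|.+1) (((-1) ^+ k * ((i_k adj k)%:R : int)) *: 'X^k).

Definition hat_subgraph (n : nat) (adjH adjG : rel 'I_n) : Prop :=
  hat_V adjH \subset hat_V adjG /\
  (forall p q, p \in hat_V adjH -> q \in hat_V adjH ->
     hat_adj adjH p q -> hat_adj adjG p q).

From mathcomp Require Import all_boot all_order all_algebra zify.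
Set Implicit Arguments. Unset Strict Implicit. Unset Printing Implicit Defensive.
Import GRing.Theory.

(* Both sides count the same objects. Call r : V -> V a clique representative
   map if x <= r x, r is idempotent and any two distinct vertices with the same
   image are adjacent. Such maps with k moved points correspond bijectively to
   clique partitions with n - k blocks (send x to the largest vertex of its
   block), and to independent sets of size k of the hat graph (keep the pairs
   (x, r x) with r x <> x): each vertex is the first coordinate of at most one
   pair, no second coordinate is a first coordinate, and two pairs sharing a
   second coordinate have adjacent first coordinates. Hence a_(n-k) = i_k. *)

Section CliqueRepresentatives.
Variable n : nat.
Variable adj : rel 'I_n.
Hypothesis adj_sym : symmetric adj.

Definition is_clique_rep (r : {ffun 'I_n -> 'I_n}) :=
  [forall x : 'I_n, (x <= r x)%N && (r (r x) == r x)] &&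
  [forall x : 'I_n, forall y : 'I_n, ((x != y) && (r x == r y)) ==> adj x y].

Definition moved (r : {ffun 'I_n -> 'I_n}) := [set x | r x != x].

Definition clique_reps k := [set r | is_clique_rep r & #|moved r| == k].

Lemma clique_repP r : is_clique_rep r ->
  [/\ forall x : 'I_n, (x <= r x)%N, forall x, r (r x) = r x &
      forall x y, x != y -> r x = r y -> adj x y].
Proof.
case/andP=> /forallP r_mono /forallP r_adj; split.
- by move=> x; case/andP: (r_mono x).
- by move=> x; case/andP: (r_mono x) => _ /eqP.
- move=> x y xy rxy; move/forallP: (r_adj x) => /(_ y) /implyP; apply.
  by rewrite xy rxy eqxx.
Qed.

Lemma is_cliqueP (B : {set 'I_n}) :
  is_clique adj B -> {in B &, forall x y, x != y -> adj x y}.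
Proof.
by move=> /forall_inP B_clique x y xB yB; move/forall_inP: (B_clique x xB) => /(_ y yB) /implyP.
Qed.

Lemma card_moved_lt r : (0 < n)%N -> is_clique_rep r -> (#|moved r| < n)%N.
Proof.
move=> n_gt0 /clique_repP[r_mono _ _].
pose m := Ordinal (etrans (ltn_predL n) n_gt0).
have m_fixed : m \notin moved r.
  rewrite inE negbK; apply/eqP/val_inj/eqP; rewrite eqn_leq r_mono andbT /=.
  by have := ltn_ord (r m); lia.
have : moved r \subset [set~ m].
  by apply/subsetP => x xr; rewrite !inE; apply: contraNneq m_fixed => <-.
move/subset_leq_card; rewrite cardsC1 card_ord => le_moved.
by apply: leq_ltn_trans le_moved _; rewrite prednK.
Qed.

Lemma clique_reps_eq0 k : (0 < n)%N -> (n <= k)%N -> clique_reps k = set0.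
Proof.
move=> n_gt0 nk; apply/setP => r; rewrite !inE; apply/negbTE/andP => -[rep /eqP rk].
by move: (card_moved_lt n_gt0 rep); rewrite rk ltnNge nk.
Qed.

Definition rep_pairs (r : {ffun 'I_n -> 'I_n}) : {set 'I_n * 'I_n} :=
  [set p | (p.1 != p.2) && (r p.1 == p.2)].

Lemma rep_pairs_inj : injective rep_pairs.
Proof.
move=> r r' E; apply/ffunP => x.
have moved_eq s s' : rep_pairs s = rep_pairs s' -> s x != x -> s' x = s x.
  move=> Es sx; have : (x, s x) \in rep_pairs s by rewrite inE /= eq_sym sx eqxx.
  by rewrite Es inE /= => /andP[_ /eqP].
case: (eqVneq (r x) x) => [rx|rx]; last by rewrite (moved_eq _ _ E).
case: (eqVneq (r' x) x) => [r'x|r'x]; first by rewrite rx r'x.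
by rewrite -(moved_eq _ _ (esym E) r'x).
Qed.

Lemma card_rep_pairs r : #|rep_pairs r| = #|moved r|.
Proof.
have -> : rep_pairs r = [set (x, r x) | x in moved r].
  apply/setP => -[a b]; rewrite inE /=; apply/andP/imsetP.
  - by case=> ab /eqP rab; exists a; rewrite ?inE rab // eq_sym.
  - by case=> x; rewrite inE => rx [-> ->]; rewrite eq_sym rx.
by rewrite card_imset // => x y [].
Qed.

Lemma rep_pairs_indep r : is_clique_rep r -> hat_indep adj (rep_pairs r).
Proof.
move=> /clique_repP[r_mono r_idem r_adj]; apply/andP; split.
  apply/subsetP => -[a b]; rewrite !inE /= => /andP[ab /eqP rab].
  rewrite ltn_neqAle -rab r_mono andbT; apply/andP; split; first by rewrite rab.
  by apply: r_adj; rewrite ?r_idem ?rab.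
have no_cond a b c d : a != b -> r a = b -> c != d -> r c = d ->
    (a, b) != (c, d) -> ~~ hat_cond adj a b c d.
  move=> ab rab cd rcd ne; rewrite /hat_cond.
  have ac : a != c by apply: contra ne => /eqP ac; rewrite -rab -rcd ac.
  rewrite (negbTE ac) /=; apply/norP; split.
    by apply/eqP => bc; move: cd; rewrite -rcd -bc -rab r_idem eqxx.
  rewrite negb_and negbK; case: (eqVneq b d) => //= bd.
  by apply: r_adj; rewrite ?rab ?rcd.
apply/forallP => -[a b]; apply/implyP; rewrite inE /= => /andP[ab /eqP rab].
apply/forallP => -[c d]; apply/implyP; rewrite inE /= => /andP[cd /eqP rcd].
rewrite /hat_adj; case: eqVneq => //= ne.
by case: ifP => _; apply: no_cond; rewrite // eq_sym.
Qed.

Section IndependentSet.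
Variable S : {set 'I_n * 'I_n}.
Hypothesis S_indep : hat_indep adj S.

Lemma indep_hat_V p : p \in S -> (p.1 < p.2)%N /\ adj p.1 p.2.
Proof. by case/andP: S_indep => /subsetP S_V _ /S_V; rewrite inE => /andP. Qed.

Lemma indep_nadj p q : p \in S -> q \in S -> ~~ hat_adj adj p q.
Proof.
case/andP: S_indep => _ /forallP S_nadj pS qS.
by move/implyP: (S_nadj p) => /(_ pS) /forallP /(_ q) /implyP; apply.
Qed.

Lemma indep_fst_inj p q : p \in S -> q \in S -> p.1 = q.1 -> p = q.
Proof.
move=> pS qS pq1; apply/eqP/negPn/negP => pq.
by move: (indep_nadj pS qS); rewrite /hat_adj pq /hat_cond pq1 eqxx; case: ifP.
Qed.

Lemma indep_snd_fst p q : p \in S -> q \in S -> p.2 != q.1.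
Proof.
move=> pS qS; apply/eqP => pq.
case: (eqVneq p q) => [eq_pq|ne_pq].
  by case: (indep_hat_V pS); rewrite pq eq_pq ltnn.
move: (indep_nadj pS qS); rewrite /hat_adj ne_pq /hat_cond pq eqxx orbT /=.
case: ifP => // /negbT; rewrite -ltnNge => qp.
by case: (indep_hat_V qS) => q12 _; move: (ltn_trans q12 qp); rewrite ltnn.
Qed.

Lemma indep_adj_fst p q : p \in S -> q \in S -> p != q -> p.2 = q.2 ->
  adj p.1 q.1.
Proof.
move=> pS qS pq pq2; move: (indep_nadj pS qS).
by rewrite /hat_adj pq pq2 leqnn /hat_cond eqxx /= !negb_or negbK => /and3P[].
Qed.

(* By indep_fst_inj at most one pair of S starts at x, so the pick is canonical. *)
Definition rep_of_indep : {ffun 'I_n -> 'I_n} :=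
  [ffun x => if [pick p in S | p.1 == x] is Some p then p.2 else x].

Lemma rep_of_indep_fst p : p \in S -> rep_of_indep p.1 = p.2.
Proof.
move=> pS; rewrite ffunE; case: pickP => [q /andP[qS /eqP qp]|none].
  by rewrite (indep_fst_inj qS pS qp).
by move: (none p); rewrite /= pS eqxx.
Qed.

Lemma rep_of_indep_fixed x : (forall p, p \in S -> p.1 != x) ->
  rep_of_indep x = x.
Proof.
move=> x_free; rewrite ffunE; case: pickP => [q /andP[qS qx]|//].
by move: (x_free q qS); rewrite qx.
Qed.

Lemma rep_of_indep_snd p : p \in S -> rep_of_indep p.2 = p.2.
Proof. by move=> pS; apply: rep_of_indep_fixed => q qS; rewrite eq_sym indep_snd_fst. Qed.

Lemma fst_indepP x :
  (exists2 p, p \in S & p.1 = x) \/ (forall p, p \in S -> p.1 != x).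
Proof.
case: (pickP [pred p in S | p.1 == x]) => [p /andP[pS /eqP px]|none].
  by left; exists p.
by right => p pS; move: (none p); rewrite /= pS /= => ->.
Qed.

Lemma rep_of_indep_rep : is_clique_rep rep_of_indep.
Proof.
apply/andP; split.
  apply/forallP => x; case: (fst_indepP x) => [[p pS <-]|x_free].
    rewrite rep_of_indep_fst // rep_of_indep_snd // eqxx andbT.
    by case: (indep_hat_V pS) => /ltnW.
  by rewrite !rep_of_indep_fixed // eqxx leqnn.
apply/forallP => x; apply/forallP => y; apply/implyP => /andP[xy /eqP rxy].
case: (fst_indepP x) => [[p pS px]|x_free]; case: (fst_indepP y) => [[q qS qy]|y_free].
- subst x y; rewrite !rep_of_indep_fst // in rxy.
  by apply: indep_adj_fst => //; apply: contra xy => /eqP ->.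
- subst x; rewrite rep_of_indep_fst // rep_of_indep_fixed // in rxy.
  by rewrite -rxy; case: (indep_hat_V pS).
- subst y; rewrite rep_of_indep_fst // rep_of_indep_fixed // in rxy.
  by rewrite rxy adj_sym; case: (indep_hat_V qS).
- by move: xy; rewrite -(rep_of_indep_fixed x_free) -(rep_of_indep_fixed y_free) rxy eqxx.
Qed.

Lemma rep_of_indepK : rep_pairs rep_of_indep = S.
Proof.
apply/setP => -[a b]; rewrite inE /=; apply/idP/idP.
- case/andP => ab /eqP rab; case: (fst_indepP a) => [[q qS qa]|a_free].
    by rewrite -rab -qa rep_of_indep_fst // -surjective_pairing.
  by move: ab; rewrite -rab rep_of_indep_fixed ?eqxx.
- move=> abS; rewrite (rep_of_indep_fst abS) eqxx andbT.
  by case: (indep_hat_V abS) => /= ab _; rewrite neq_ltn ab.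
Qed.

End IndependentSet.

Lemma i_k_clique_reps k : i_k adj k = #|clique_reps k|.
Proof.
rewrite /i_k -(card_imset _ rep_pairs_inj); apply: eq_card => S; rewrite inE.
apply/idP/imsetP.
- case/andP => S_indep /eqP Sk; exists (rep_of_indep S); last by rewrite rep_of_indepK.
  by rewrite inE rep_of_indep_rep // -card_rep_pairs rep_of_indepK // Sk eqxx.
- case=> r; rewrite inE => /andP[rep /eqP rk] ->.
  by rewrite rep_pairs_indep // card_rep_pairs rk eqxx.
Qed.

Lemma i_k_eq0 k : (#|hat_V adj| < k)%N -> i_k adj k = 0%N.
Proof.
move=> Vk; apply/eqP; rewrite cards_eq0; apply/eqP/setP => S; rewrite !inE.
apply/negbTE/andP => -[/andP[S_V _] /eqP Sk].
by move: (subset_leq_card S_V); rewrite Sk leqNgt Vk.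
Qed.

Definition rep_block (r : {ffun 'I_n -> 'I_n}) x := [set y | r x == r y].

Definition rep_partition (r : {ffun 'I_n -> 'I_n}) := preim_partition r [set: 'I_n].

Lemma rep_partitionE r : rep_partition r = [set rep_block r x | x in [set: 'I_n]].
Proof.
by apply/setP => B; apply/imsetP/imsetP => -[x _ ->]; exists x => //;
  apply/setP => y; rewrite !inE.
Qed.

Lemma rep_partition_inj r r' : is_clique_rep r -> is_clique_rep r' ->
  rep_partition r = rep_partition r' -> r = r'.
Proof.
move=> /clique_repP[r_mono r_idem _] /clique_repP[r'_mono r'_idem _] E.
have block_eq x : rep_block r x = rep_block r' x.
  have : rep_block r x \in rep_partition r' by rewrite -E rep_partitionE imset_f.
  rewrite rep_partitionE => /imsetP[z _ Ez].
  have : x \in rep_block r' z by rewrite -Ez inE.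
  by rewrite inE => /eqP zx; apply/setP => y; rewrite Ez !inE zx.
apply/ffunP => x; apply/val_inj/eqP; rewrite eqn_leq.
have r'r : r' (r x) = r' x.
  have : r x \in rep_block r x by rewrite inE r_idem.
  by rewrite block_eq inE => /eqP.
have rr' : r (r' x) = r x.
  have : r' x \in rep_block r' x by rewrite inE r'_idem.
  by rewrite -block_eq inE => /eqP.
by rewrite -{1}r'r r'_mono /= -rr' r_mono.
Qed.

Lemma card_rep_partition r : is_clique_rep r ->
  #|rep_partition r| = (n - #|moved r|)%N.
Proof.
move=> /clique_repP[_ r_idem _].
have -> : rep_partition r = [set rep_block r x | x in ~: moved r].
  rewrite rep_partitionE; apply/setP => B; apply/imsetP/imsetP => -[x xin ->].
    exists (r x); first by rewrite !inE negbK r_idem.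
    by apply/setP => y; rewrite !inE r_idem.
  by exists x.
rewrite card_in_imset; first by rewrite cardsCs card_ord setCK.
move=> x y; rewrite !inE !negbK => /eqP rx /eqP ry xy.
have : x \in rep_block r y by rewrite -xy inE.
by rewrite inE rx ry => /eqP.
Qed.

Lemma rep_partition_clique r : is_clique_rep r ->
  [forall B in rep_partition r, is_clique adj B].
Proof.
move=> /clique_repP[_ _ r_adj].
apply/forallP => B; apply/implyP; rewrite rep_partitionE => /imsetP[x _ ->].
apply/forallP => y; apply/implyP; rewrite inE => /eqP xy.
apply/forallP => z; apply/implyP; rewrite inE => /eqP xz.
by apply/implyP => yz; apply: r_adj; rewrite -?xy -?xz.
Qed.

Section CliquePartition.
Variable P : {set {set 'I_n}}.
Hypothesis P_part : partition P [set: 'I_n].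
Hypothesis P_clique : [forall B in P, is_clique adj B].

Definition rep_of_partition : {ffun 'I_n -> 'I_n} :=
  [ffun x => [arg max_(y > x in pblock P x) (y : nat)]].

Let P_cover : cover P = [set: 'I_n].
Proof. by case/and3P: P_part => /eqP. Qed.

Let P_triv : trivIset P.
Proof. by case/and3P: P_part. Qed.

Let mem_own_pblock x : x \in pblock P x.
Proof. by rewrite mem_pblock P_cover inE. Qed.

Lemma rep_of_partitionP x :
  rep_of_partition x \in pblock P x /\
  forall w, w \in pblock P x -> (w <= rep_of_partition x)%N.
Proof. by rewrite ffunE; case: arg_maxnP => // y yx ymax; split => // w /ymax. Qed.

Lemma rep_of_partition_max x z : z \in pblock P x ->
  (forall w, w \in pblock P x -> (w <= z)%N) -> rep_of_partition x = z.
Proof.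
move=> zx zmax; case: (rep_of_partitionP x) => rx rmax.
by apply/val_inj/eqP; rewrite eqn_leq zmax // rmax.
Qed.

Lemma eq_rep_of_partition x y :
  (pblock P x == pblock P y) = (rep_of_partition x == rep_of_partition y).
Proof.
apply/eqP/eqP => [xy|rxy].
  by case: (rep_of_partitionP y) => ry rmax; apply: rep_of_partition_max; rewrite xy.
case: (rep_of_partitionP x) (rep_of_partitionP y) => rx _ [ry _].
by rewrite -(same_pblock P_triv rx) rxy (same_pblock P_triv ry).
Qed.

Lemma rep_of_partition_rep : is_clique_rep rep_of_partition.
Proof.
apply/andP; split.
  apply/forallP => x; case: (rep_of_partitionP x) => rx rmax.
  rewrite rmax //= -eq_rep_of_partition; exact/eqP/same_pblock.
apply/forallP => x; apply/forallP => y; apply/implyP => /andP[xy].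
rewrite -eq_rep_of_partition => /eqP Pxy.
have Px_clique : is_clique adj (pblock P x).
  by apply: (forall_inP P_clique); rewrite pblock_mem ?P_cover.
have := is_cliqueP Px_clique (mem_own_pblock x); rewrite Pxy.
by move=> /(_ y (mem_own_pblock y)); apply.
Qed.

Lemma rep_of_partitionK : rep_partition rep_of_partition = P.
Proof.
have block_pblock x : rep_block rep_of_partition x = pblock P x.
  by apply/setP => y; rewrite inE -eq_rep_of_partition eq_pblock ?P_cover.
apply/setP => B; rewrite rep_partitionE; apply/imsetP/idP.
  by case=> x _ ->; rewrite block_pblock pblock_mem ?P_cover.
move=> BP; have /set0Pn[x xB] : B != set0.
  by case/and3P: P_part => _ _; apply: contraNneq => <-.
by exists x; rewrite // block_pblock (def_pblock P_triv BP xB).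
Qed.

End CliquePartition.

Lemma a_k_clique_reps k : (k <= n)%N -> a_k adj (n - k) = #|clique_reps k|.
Proof.
move=> kn; have rep_partition_inj_on : {in clique_reps k &, injective rep_partition}.
  by move=> r r'; rewrite !inE => /andP[rep _] /andP[rep' _]; apply: rep_partition_inj.
rewrite /a_k -(card_in_imset rep_partition_inj_on); apply: eq_card => P; rewrite inE.
apply/idP/imsetP.
- case/and3P => P_part P_clique /eqP Pk; exists (rep_of_partition P).
    rewrite inE rep_of_partition_rep //=.
    have := card_rep_partition (rep_of_partition_rep P_part P_clique).
    rewrite rep_of_partitionK // Pk.
    have := subset_leq_card (subsetT (moved (rep_of_partition P))).
    rewrite cardsT card_ord; move: #|_| => m m_le m_eq; apply/eqP; lia.
  by rewrite rep_of_partitionK.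
- case=> r; rewrite inE => /andP[rep /eqP rk] ->.
  by rewrite preim_partitionP rep_partition_clique // card_rep_partition // rk eqxx.
Qed.

End CliqueRepresentatives.

Lemma coef_sum_scaleXn (R : nzRingType) m (E : nat -> R) i :
  ((\sum_(k < m) E k *: 'X^k)`_i = if (i < m)%N then E i else 0)%R.
Proof. by rewrite -poly_def coef_poly. Qed.

Section HatPolynomial.
Variable n : nat.
Variable adj : rel 'I_n.
Hypothesis adj_sym : symmetric adj.
Hypothesis n_gt0 : (0 < n)%N.
Local Open Scope ring_scope.

Lemma coef_hstar i : (hstar adj)`_i = (-1) ^+ i * (#|clique_reps adj i|)%:R.
Proof.
rewrite /hstar (coef_sum_scaleXn _ (fun k => (-1) ^+ k * (a_k adj (n - k))%:R)).
case: ltnP => [lt_in|le_ni].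
  by rewrite a_k_clique_reps // ltnW.
by rewrite clique_reps_eq0 // cards0 mulr0.
Qed.

Lemma coef_indep_poly_hat i :
  (indep_poly_hat adj)`_i = (-1) ^+ i * (#|clique_reps adj i|)%:R.
Proof.
rewrite /indep_poly_hat (coef_sum_scaleXn _ (fun k => (-1) ^+ k * (i_k adj k)%:R)).
rewrite -i_k_clique_reps //.
by case: ltnP => // lt_Vi; rewrite i_k_eq0 // mulr0.
Qed.

Lemma hstar_eq_indep_poly_hat : hstar adj = indep_poly_hat adj.
Proof. by apply/polyP => i; rewrite coef_hstar coef_indep_poly_hat. Qed.

End HatPolynomial.

Lemma hat_cond_del_edge_last n (adj : rel 'I_n) (a b i j k l : 'I_n) :
  val b = (n - 1)%N -> (i < j)%N -> (k < l)%N ->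
  hat_cond (del_edge adj a b) i j k l -> hat_cond adj i j k l.
Proof.
move=> b_last ij kl; rewrite /hat_cond /del_edge.
case/or3P => [->|->|/andP[/eqP jl]]; rewrite ?orbT //; subst l.
rewrite negb_and negbK => /orP[nik|ik_ab]; first by rewrite eqxx nik !orbT.
have := ltn_ord j; move: b_last => /= b_last.
by case/orP: ik_ab => /andP[/eqP ? /eqP ?]; subst; lia.
Qed.

Lemma hat_subgraph_del_edge_last n (adj : rel 'I_n) (a b : 'I_n) :
  val b = (n - 1)%N -> hat_subgraph (del_edge adj a b) adj.
Proof.
move=> b_last; split.
  by apply/subsetP => p; rewrite !inE /del_edge => /andP[-> /andP[-> _]].
move=> [i j] [k l]; rewrite !inE /= => /andP[ij _] /andP[kl _].
rewrite /hat_adj /= => /andP[-> hat_ijkl] /=.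
by case: ifP hat_ijkl => _; apply: hat_cond_del_edge_last.
Qed.

Theorem proposition2 (n : nat) (adj : rel 'I_n)
  (adj_sym : symmetric adj) (adj_irr : irreflexive adj) (n_gt0 : (0 < n)%N) :
  hstar adj = indep_poly_hat adj /\
  (forall a b : 'I_n, val a = (n - 2)%N -> val b = (n - 1)%N -> adj a b ->
     hat_subgraph (del_edge adj a b) adj).
Proof.
(* Loops never matter (cliques and hat vertices only relate distinct vertices),
   and for the second claim only the position of b is used. *)
split; first exact: hstar_eq_indep_poly_hat.
by move=> a b _ b_last _; apply: hat_subgraph_del_edge_last.
Qed.
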